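(* Let $X$ be a CAT(0) space, $T:X\to X$, $C\subseteq X$ nonempty and $\varphi:[0,\infty)\to[0,\infty)$ an increasing function vanishing only at $0$. If $T$ is uniformly firmly nonexpansive on $C$ with modulus $\varphi$, then $T$ is uniformly $(P_2)$ on $C$ with modulus $\varphi$.
   Context: A geodesic space $(X,d)$ is CAT(0) if for all $z\in X$, all geodesics $\gamma:[a,b]\to X$ and all $t\in[0,1]$, $d^2(z,\gamma((1-t)a+tb))\le(1-t)d^2(z,\gamma(a))+td^2(z,\gamma(b))-t(1-t)d^2(\gamma(a),\gamma(b))$; $(1-t)x+ty$ denotes the point at distance $t\,d(x,y)$ from $x$ on the unique geodesic from $x$ to $y$. $T$ is uniformly firmly nonexpansive on $C$ with modulus $\varphi$ if $T(C)\subseteq C$ and for all $x,y\in C$, $t\in[0,1]$: $d^2(Tx,Ty)\le d^2((1-t)x+tTx,(1-t)y+tTy)-2(1-t)\varphi(d(Tx,Ty))$. $T$ is uniformly $(P_2)$ on $C$ with modulus $\varphi$ if $T(C)\subseteq C$ and for all $x,y\in C$: $2d^2(Tx,Ty)\le d^2(x,Ty)+d^2(y,Tx)-d^2(x,Tx)-d^2(y,Ty)-2\varphi(d(Tx,Ty))$. *)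

From Stdlib Require Import Reals Lra ClassicalEpsilon.
Open Scope R_scope.

Definition is_metric {X : Type} (d : X -> X -> R) : Prop :=
  (forall x y, 0 <= d x y) /\
  (forall x y, d x y = 0 <-> x = y) /\
  (forall x y, d x y = d y x) /\
  (forall x y z, d x z <= d x y + d y z).

Definition is_geodesic {X : Type} (d : X -> X -> R) (gamma : R -> X) (a b : R) : Prop :=
  a <= b /\
  forall s t, a <= s <= b -> a <= t <= b -> d (gamma s) (gamma t) = Rabs (s - t).

Definition geodesic_space {X : Type} (d : X -> X -> R) : Prop :=
  is_metric d /\
  forall x y, exists a b gamma,
    is_geodesic d gamma a b /\ gamma a = x /\ gamma b = y.

Definition CAT0 {X : Type} (d : X -> X -> R) : Prop :=
  geodesic_space d /\
  forall (z : X) (gamma : R -> X) (a b t : R),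
    is_geodesic d gamma a b -> 0 <= t <= 1 ->
    (d z (gamma ((1 - t) * a + t * b)))^2 <=
      (1 - t) * (d z (gamma a))^2 + t * (d z (gamma b))^2
      - t * (1 - t) * (d (gamma a) (gamma b))^2.

(* (1-t)x + t y : the point at distance t d(x,y) from x on the (unique, in a
   CAT(0) space) geodesic from x to y; characterised metrically as the point z
   with d(x,z) = t d(x,y) and d(z,y) = (1-t) d(x,y). *)
Definition conv {X : Type} (d : X -> X -> R) (x y : X) (t : R) : X :=
  epsilon (inhabits x)
    (fun z => d x z = t * d x y /\ d z y = (1 - t) * d x y).

Definition modulus (phi : R -> R) : Prop :=
  (forall s, 0 <= s -> 0 <= phi s) /\
  (forall s t, 0 <= s -> s <= t -> phi s <= phi t) /\
  (forall s, 0 <= s -> (phi s = 0 <-> s = 0)).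

Definition maps_into {X : Type} (T : X -> X) (C : X -> Prop) : Prop :=
  forall x, C x -> C (T x).

Definition uniformly_firmly_nonexpansive {X : Type} (d : X -> X -> R)
  (T : X -> X) (C : X -> Prop) (phi : R -> R) : Prop :=
  maps_into T C /\
  forall x y t, C x -> C y -> 0 <= t <= 1 ->
    (d (T x) (T y))^2 <=
      (d (conv d x (T x) t) (conv d y (T y) t))^2
      - 2 * (1 - t) * phi (d (T x) (T y)).

Definition uniformly_P2 {X : Type} (d : X -> X -> R)
  (T : X -> X) (C : X -> Prop) (phi : R -> R) : Prop :=
  maps_into T C /\
  forall x y, C x -> C y ->
    2 * (d (T x) (T y))^2 <=
      (d x (T y))^2 + (d y (T x))^2 - (d x (T x))^2 - (d y (T y))^2
      - 2 * phi (d (T x) (T y)).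

(* Write u = (1-t)x + tTx and v = (1-t)y + tTy. Applying the CAT(0) inequality
   three times gives the four-point estimate
     d(u,v)^2 <= (1-t)^2 d(x,y)^2 + t^2 d(Tx,Ty)^2 + t(1-t) S,
   S = d(x,Ty)^2 + d(y,Tx)^2 - d(x,Tx)^2 - d(y,Ty)^2. Together with uniform firm
   nonexpansiveness at t = 1-e this yields, after dividing by e,
     2 d(Tx,Ty)^2 - S + 2 phi(d(Tx,Ty)) <= e (d(x,y)^2 + d(Tx,Ty)^2 - S),
   and letting e -> 0 gives uniform (P2). *)

From Stdlib Require Import Reals Lra ClassicalEpsilon.
Open Scope R_scope.

Section CAT0Geometry.

Variables (X : Type) (d : X -> X -> R).

Lemma geodesic_point_dist (g : R -> X) (a b t : R) :
  is_geodesic d g a b -> 0 <= t <= 1 ->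
  d (g a) (g ((1 - t) * a + t * b)) = t * d (g a) (g b) /\
  d (g ((1 - t) * a + t * b)) (g b) = (1 - t) * d (g a) (g b).
Proof.
  intros [Hab Hg] Ht.
  assert (Hs : a <= (1 - t) * a + t * b <= b) by nra.
  rewrite !Hg by lra.
  rewrite !Rabs_left1 by nra.
  split; ring.
Qed.

Hypothesis Hd : CAT0 d.

Lemma conv_geodesic (g : R -> X) (a b t : R) :
  is_geodesic d g a b -> 0 <= t <= 1 ->
  conv d (g a) (g b) t = g ((1 - t) * a + t * b).
Proof.
  intros Hg Ht.
  destruct Hd as [[[Hpos [Hzero [Hsym _]]] _] Hcat].
  set (s := (1 - t) * a + t * b).
  assert (Hex : exists z, d (g a) z = t * d (g a) (g b) /\
                          d z (g b) = (1 - t) * d (g a) (g b))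
    by (exists (g s); exact (geodesic_point_dist g a b t Hg Ht)).
  destruct (epsilon_spec (inhabits (g a)) _ Hex) as [E1 E2].
  fold (conv d (g a) (g b) t) in E1, E2.
  set (z := conv d (g a) (g b) t) in *.
  apply Hzero.
  (* with base point z itself, the right-hand side of the CAT(0) inequality is 0 *)
  pose proof (Hcat z g a b t Hg Ht) as H.
  fold s in H.
  rewrite (Hsym z (g a)), E1, E2 in H.
  pose proof (Hpos z (g s)).
  nra.
Qed.

Lemma CAT0_conv (x y w : X) (t : R) :
  0 <= t <= 1 ->
  (d w (conv d x y t))^2 <=
    (1 - t) * (d w x)^2 + t * (d w y)^2 - t * (1 - t) * (d x y)^2.
Proof.
  intros Ht.
  destruct Hd as [[_ Hgeo] Hcat].
  destruct (Hgeo x y) as [a [b [g [Hg [<- <-]]]]].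
  rewrite conv_geodesic by assumption.
  exact (Hcat w g a b t Hg Ht).
Qed.

Lemma CAT0_conv_conv (x x' y y' : X) (t : R) :
  0 <= t <= 1 ->
  (d (conv d x x' t) (conv d y y' t))^2 <=
    (1 - t)^2 * (d x y)^2 + t^2 * (d x' y')^2
    + t * (1 - t) * ((d x y')^2 + (d y x')^2 - (d x x')^2 - (d y y')^2).
Proof.
  intros Ht.
  destruct Hd as [[[_ [_ [Hsym _]]] _] _].
  set (v := conv d y y' t).
  assert (Hu := CAT0_conv x x' v t Ht).
  assert (Hx := CAT0_conv y y' x t Ht).
  assert (Hx' := CAT0_conv y y' x' t Ht).
  fold v in Hx, Hx'.
  rewrite (Hsym x' y) in Hx'.
  rewrite (Hsym v), (Hsym v x), (Hsym v x') in Hu.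
  assert (H1 : (1 - t) * (d x v)^2 <= (1 - t) *
            ((1 - t) * (d x y)^2 + t * (d x y')^2 - t * (1 - t) * (d y y')^2))
    by (apply Rmult_le_compat_l; lra).
  assert (H2 : t * (d x' v)^2 <= t *
            ((1 - t) * (d y x')^2 + t * (d x' y')^2 - t * (1 - t) * (d y y')^2))
    by (apply Rmult_le_compat_l; lra).
  lra.
Qed.

End CAT0Geometry.

Lemma le0_of_le_small_mul (a K : R) :
  (forall e, 0 < e <= 1 -> a <= e * K) -> a <= 0.
Proof.
  intros H.
  apply Rle_plus_epsilon; intros eps Heps.
  pose proof (Rabs_pos K). pose proof (Rle_abs K).
  set (e := eps / (eps + Rabs K + 1)).
  assert (He : e * (eps + Rabs K + 1) = eps) by (unfold e; field; lra).
  assert (He0 : 0 < e) by (unfold e; apply Rdiv_lt_0_compat; lra).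
  assert (He1 : e <= 1) by nra.
  pose proof (H e (conj He0 He1)).
  nra.
Qed.

Theorem proposition4p2 (X : Type) (d : X -> X -> R) (T : X -> X)
  (C : X -> Prop) (phi : R -> R) :
  CAT0 d ->
  (exists x0, C x0) ->
  modulus phi ->
  uniformly_firmly_nonexpansive d T C phi ->
  uniformly_P2 d T C phi.
Proof.
  intros Hd _ _ [HT Hfne]. split; [exact HT |].
  intros x y Cx Cy.
  set (D := (d (T x) (T y))^2).
  set (S := (d x (T y))^2 + (d y (T x))^2 - (d x (T x))^2 - (d y (T y))^2).
  set (p := phi (d (T x) (T y))).
  enough (2 * D - S + 2 * p <= 0) by (unfold D, S, p in *; lra).
  apply (le0_of_le_small_mul _ ((d x y)^2 + D - S)).
  intros e He.
  assert (Ht : 0 <= 1 - e <= 1) by lra.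
  pose proof (Hfne x y (1 - e) Cx Cy Ht) as Hf.
  pose proof (CAT0_conv_conv X d Hd x (T x) y (T y) (1 - e) Ht) as Hq.
  fold D S p in Hf, Hq.
  replace (1 - (1 - e)) with e in * by ring.
  assert (Hscaled : e * (2 * D - S + 2 * p) <= e * (e * ((d x y)^2 + D - S)))
    by lra.
  apply Rmult_le_reg_l in Hscaled; lra.
Qed.
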